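(* Let $(\Lambda,d)$ be a $k$-graph and let $(\overline{\Lambda},\overline d)$ be the extension described in the context. Then $\overline{\Lambda}$ with $\overline d$ satisfies the factorization property: for every morphism $f$ of $\overline{\Lambda}$ and $a,b\in\mathbb{N}^k$ with $\overline d(f)=a+b$ there exist unique morphisms $g,h$ of $\overline{\Lambda}$ with $f=gh$, $\overline d(g)=a$ and $\overline d(h)=b$.
   Context: A $k$-graph $(\Lambda,d)$ is a countable category with a degree functor $d:\Lambda\to\mathbb{N}^k$ satisfying unique factorization; $\Lambda^0$ vertices, $r,s$ range/source, $v\Lambda^n=\{\lambda:r(\lambda)=v,d(\lambda)=n\}$; $e_i$ standard basis, $\le$ coordinatewise, $\vee,\wedge$ coordinatewise max/min. For $m\in(\mathbb{N}\cup\{\infty\})^k$, $\Omega_{k,m}$ has objects $\{p\in\mathbb{N}^k:p\le m\}$, morphisms $(p,q)$, $p\le q\le m$, $r(p,q)=p$, $s(p,q)=q$, $d(p,q)=q-p$. A graph morphism $x:\Omega_{k,m}\to\Lambda$ is a degree-preserving functor; $d(x)=m$, $x(a,b)=x((a,b))$, $x(a)=x(a,a)$. It is a boundary path if there is $n_x\in\mathbb{N}^k$, $n_x\le d(x)$, with $x(p)\Lambda^{e_i}=\emptyset$ whenever $p\in\mathbb{N}^k$, $n_x\le p\le d(x)$, $p_i=d(x)_i$; $\Lambda^{\le\infty}$ is the set of boundary paths. $\sigma^px(a,b)=x(a+p,b+p)$ ($p\le d(x)$); $\lambda x$ denotes concatenation of $\lambda$ (with $s(\lambda)=x(0)$) in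 front of $x$, a graph morphism on $\Omega_{k,d(\lambda)+d(x)}$. $V_\Lambda=\{(x;m):x\in\Lambda^{\le\infty},m\in\mathbb{N}^k,m\not\le d(x)\}$, $(x;m)\approx(y;p)$ iff $x(m\wedge d(x))=y(p\wedge d(y))$ and $m-m\wedge d(x)=p-p\wedge d(y)$; classes $[x;m]$ form $\widetilde{V_\Lambda}$. $P_\Lambda=\{(x;(m,n)):x\in\Lambda^{\le\infty},m\le n\in\mathbb{N}^k,n\not\le d(x)\}$, $(x;(m,n))\sim(y;(p,q))$ iff $x(m\wedge d(x),n\wedge d(x))=y(p\wedge d(y),q\wedge d(y))$, $m-m\wedge d(x)=p-p\wedge d(y)$, $n-m=q-p$; classes $[x;(m,n)]$ form $\widetilde{P_\Lambda}$. The extension $\overline{\Lambda}$ is the category with objects $\Lambda^0\sqcup\widetilde{V_\Lambda}$ and morphisms $\Lambda\sqcup\widetilde{P_\Lambda}$: on $\Lambda$ everything is as in $\Lambda$; $\overline r([x;(m,n)])=x(m)$ if $m\le d(x)$, else $[x;m]$; $\overline s([x;(m,n)])=[x;n]$; identity at $[x;m]$ is $[x;(m,m)]$; $\lambda[x;(m,n)]=[\lambda\sigma^mx;(0,d(\lambda)+n-m)]$ when $s(\lambda)=\overline r([x;(m,n)])$; $[x;(m,n)][y;(p,q)]=[z;(m,n+q-p)]$ with $z=x(0,n\wedge d(x))\sigma^{p\wedge d(y)}y$ when $\overline s([x;(m,n)])=\overline r([y;(p,q)])$. The degree is $\overline d|_\Lambda=d$ and $\overline d([x;(m,n)])=n-m$.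 *)

From Stdlib Require Import ClassicalEpsilon.
From mathcomp Require Import all_boot.
Set Implicit Arguments. Unset Strict Implicit. Unset Printing Implicit Defensive.

Definition Nk (k : nat) := 'I_k -> nat.
(* None stands for infinity *)
Definition Nki (k : nat) := 'I_k -> option nat.

Definition zerok (k : nat) : Nk k := fun _ => 0.
Definition addk k (a b : Nk k) : Nk k := fun i => a i + b i.
Definition subk k (a b : Nk k) : Nk k := fun i => a i - b i.
Definition joink k (a b : Nk k) : Nk k := fun i => maxn (a i) (b i).
Definition lek k (a b : Nk k) : bool := [forall i, a i <= b i].
Definition unitk k (i : 'I_k) : Nk k := fun j => nat_of_bool (j == i).
Definition lei k (p : Nk k) (m : Nki k) : bool :=
  [forall i, if m i is Some mi then p i <= mi else true].
Definition meeti k (p : Nk k) (m : Nki k) : Nk k :=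
  fun i => if m i is Some mi then minn (p i) mi else p i.
Definition addi k (a : Nk k) (m : Nki k) : Nki k := fun i => omap (addn (a i)) (m i).
Definition subi k (m : Nki k) (a : Nk k) : Nki k := fun i => omap (fun mi => mi - a i) (m i).

(* comp f g is the composite "f g" (defined when src f = rng g);
   rng (f g) = rng f, src (f g) = src g. *)
Record kgraph (k : nat) := KGraph {
  Obj : Type;
  Mor : Type;
  rng : Mor -> Obj;
  src : Mor -> Obj;
  idm : Obj -> Mor;
  comp : Mor -> Mor -> Mor;
  deg : Mor -> Nk k;
  obj_countable : exists c : Obj -> nat, injective c;
  mor_countable : exists c : Mor -> nat, injective c;
  rng_idm : forall v, rng (idm v) = v;
  src_idm : forall v, src (idm v) = v;
  comp_idl : forall f, comp (idm (rng f)) f = f;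
  comp_idr : forall f, comp f (idm (src f)) = f;
  rng_comp : forall f g, src f = rng g -> rng (comp f g) = rng f;
  src_comp : forall f g, src f = rng g -> src (comp f g) = src g;
  compA : forall f g h, src f = rng g -> src g = rng h ->
    comp f (comp g h) = comp (comp f g) h;
  deg_idm : forall v, deg (idm v) = @zerok k;
  deg_comp : forall f g, src f = rng g -> deg (comp f g) = addk (deg f) (deg g);
  unique_fact : forall l m n, deg l = addk m n ->
    exists mu nu, [/\ src mu = rng nu, comp mu nu = l, deg mu = m & deg nu = n] /\
      forall mu' nu', src mu' = rng nu' -> comp mu' nu' = l -> deg mu' = m ->
        deg nu' = n -> mu' = mu /\ nu' = nu
}.

Arguments rng {k L} : rename.
Arguments src {k L} : rename.
Arguments idm {k L} : rename.
Arguments comp {k L} : rename.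
Arguments deg {k L} : rename.

Section Ext.
Context {k : nat} (L : kgraph k).

(* pdeg x = m = d(x);  pmap x p q = x(p,q) (only meaningful for p <= q <= m) *)
Record kpath := KPath { pdeg : Nki k; pmap : Nk k -> Nk k -> Mor L }.

Definition pv (x : kpath) (p : Nk k) : Obj L := rng (pmap x p p).

Definition is_graph_morphism (x : kpath) : Prop :=
  forall p q t, lek p q -> lek q t -> lei t (pdeg x) ->
    [/\ deg (pmap x p q) = subk q p,
        rng (pmap x p q) = pv x p,
        src (pmap x p q) = pv x q,
        pmap x p p = idm (pv x p)
      & comp (pmap x p q) (pmap x q t) = pmap x p t].

Definition is_boundary_path (x : kpath) : Prop :=
  is_graph_morphism x /\
  exists nx : Nk k, lei nx (pdeg x) /\
    forall p : Nk k, lek nx p -> lei p (pdeg x) ->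
      forall i : 'I_k, pdeg x i = Some (p i) ->
        forall l : Mor L, rng l = pv x p -> deg l <> unitk i.

Definition seg (w : Mor L) (p q : Nk k) : Mor L :=
  epsilon (inhabits w) (fun mu => exists al be,
    [/\ src al = rng mu, src mu = rng be, comp al (comp mu be) = w,
        deg al = p & deg mu = subk q p]).

Definition shift (x : kpath) (p : Nk k) : kpath :=
  KPath (subi (pdeg x) p) (fun a b => pmap x (addk a p) (addk b p)).

(* concatenation l x  (s(l) = x(0)):  (l x)(p,q) is the segment (p,q) of
   l x(0, (q \/ d(l)) - d(l)) *)
Definition concat (l : Mor L) (x : kpath) : kpath :=
  KPath (addi (deg l) (pdeg x))
    (fun p q => seg (comp l (pmap x (@zerok k) (subk (joink q (deg l)) (deg l)))) p q).

Definition inV (x : kpath) (m : Nk k) : Prop := is_boundary_path x /\ ~~ lei m (pdeg x).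
Definition equivV (x : kpath) (m : Nk k) (y : kpath) (p : Nk k) : Prop :=
  pv x (meeti m (pdeg x)) = pv y (meeti p (pdeg y)) /\
  subk m (meeti m (pdeg x)) = subk p (meeti p (pdeg y)).

Definition inP (x : kpath) (m n : Nk k) : Prop :=
  is_boundary_path x /\ lek m n /\ ~~ lei n (pdeg x).
Definition equivP (x : kpath) (m n : Nk k) (y : kpath) (p q : Nk k) : Prop :=
  [/\ pmap x (meeti m (pdeg x)) (meeti n (pdeg x)) =
        pmap y (meeti p (pdeg y)) (meeti q (pdeg y)),
      subk m (meeti m (pdeg x)) = subk p (meeti p (pdeg y))
    & subk n m = subk q p].

Inductive Obar := OL of Obj L | OV of kpath & Nk k.
Inductive Mbar := ML of Mor L | MP of kpath & Nk k & Nk k.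

(* equality of objects / morphisms of Lambda-bar (equality of classes) *)
Definition obar_eq (u v : Obar) : Prop :=
  match u, v with
  | OL a, OL b => a = b
  | OV x m, OV y p => equivV x m y p
  | _, _ => False
  end.
Definition mbar_eq (f g : Mbar) : Prop :=
  match f, g with
  | ML a, ML b => a = b
  | MP x m n, MP y p q => equivP x m n y p q
  | _, _ => False
  end.

Definition mbar_valid (f : Mbar) : Prop :=
  match f with ML _ => True | MP x m n => inP x m n end.

Definition rbar (f : Mbar) : Obar :=
  match f with
  | ML l => OL (rng l)
  | MP x m n => if lei m (pdeg x) then OL (pv x m) else OV x m
  end.
Definition sbar (f : Mbar) : Obar :=
  match f with
  | ML l => OL (src l)
  | MP x m n => OV x n
  end.
Definition dbar (f : Mbar) : Nk k :=
  match f with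
  | ML l => deg l
  | MP x m n => subk n m
  end.

Definition composable (g h : Mbar) : Prop := obar_eq (sbar g) (rbar h).

Definition compbar (g h : Mbar) : Mbar :=
  match g, h with
  | ML l, ML l' => ML (comp l l')
  | ML l, MP x m n => MP (concat l (shift x m)) (@zerok k) (subk (addk (deg l) n) m)
  | MP x m n, MP y p q =>
      MP (concat (pmap x (@zerok k) (meeti n (pdeg x))) (shift y (meeti p (pdeg y))))
         m (subk (addk n q) p)
  | MP _ _ _, ML _ => g (* never composable *)
  end.

End Ext.

(* A morphism of the extension of degree a + b is either a morphism of the
   k-graph, where unique factorization applies directly, or a class
   [x;(m,n)] of a boundary path x.  The latter factors as
   [x;(m,m+a)][x;(m+a,n)], the first factor being the path x(m,m+a) of the
   k-graph when m + a <= d(x).  Conversely, the composite of two classes is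
   represented by the concatenation in the k-graph of the segments they
   represent, cut at the meets with the degrees, the overshoot past the end
   of the first path being carried over.  Matching this with the segment
   x(m /\ d(x), n /\ d(x)) of f, unique factorization in the k-graph splits
   it at degree a, and comparing overshoots puts the junction at m + a, so any
   factorization is equivalent to the one above. *)

From Stdlib Require Import ClassicalEpsilon FunctionalExtensionality.
From mathcomp Require Import all_boot zify.
Set Implicit Arguments. Unset Strict Implicit. Unset Printing Implicit Defensive.

Section Vectors.
Variable k : nat.
Implicit Types (a b p q : Nk k) (X : Nki k).

Lemma nk_ext a b : (forall i, a i = b i) -> a = b.
Proof. exact: functional_extensionality. Qed.

Lemma lekP p q : reflect (forall i, p i <= q i) (lek p q).
Proof. exact: forallP. Qed.

Lemma leiP p X : reflect (forall i, if X i is Some v then p i <= v else true) (lei p X).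
Proof. exact: forallP. Qed.

Lemma leiE p X : lei p X = [forall i, subk p (meeti p X) i == 0].
Proof.
apply: eq_forallb => i; rewrite /subk /meeti.
by case: (X i) => [v|]; rewrite ?subnn // subn_eq0 leq_min leqnn.
Qed.

End Vectors.

(* Uses every vector hypothesis in the context, and the case split on minima
   is exponential: call it before large hypotheses are introduced. *)
Ltac nk_arith :=
  let i := fresh "i" in
  first [apply: nk_ext | apply/lekP | apply/leiP]; move=> i;
  repeat match goal with
  | H : is_true (lek _ _) |- _ => move: (elimT (lekP _ _) H i); clear H
  | H : is_true (lei _ _) |- _ => move: (elimT (leiP _ _) H i); clear H
  | H : @eq (Nk _) _ _ |- _ => move: (congr1 (fun f => f i) H); clear H
  end;
  repeat match goal with H : _ |- _ => clear H end;
  rewrite /= /addk /subk /meeti /addi /subi /zerok /joink /=;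
  repeat match goal with |- context [?X i] =>
    lazymatch type of (X i) with option nat => case: (X i) => [?|] /= end end;
  repeat match goal with |- context [minn ?u ?v] => case: (leqP u v) => ? end;
  first [done | lia].

Section Meets.
Variable k : nat.
Implicit Types (a b m p q : Nk k) (X Y : Nki k).

Lemma lei_meeti p X : lei (meeti p X) X.
Proof. nk_arith. Qed.

Lemma meeti_id p X : lei p X -> meeti p X = p.
Proof. move=> ?; nk_arith. Qed.

Lemma lek_meeti p q X : lek p q -> lek (meeti p X) (meeti q X).
Proof. move=> ?; nk_arith. Qed.

Lemma lekk p : lek p p.
Proof. nk_arith. Qed.

Lemma lek_addr m a : lek m (addk m a).
Proof. nk_arith. Qed.

Lemma addKk m a : subk (addk m a) m = a.
Proof. nk_arith. Qed.

Lemma lei_trans p q X : lek p q -> lei q X -> lei p X.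
Proof. move=> ? ?; nk_arith. Qed.

(* Coordinatewise, with x' ending at m' + a and y starting at p: the junction
   of the two segments lies at m + a on x, both in length and in how far it
   overshoots d(x). *)
Lemma overshoot_split X X' Y m a b m' p :
  subk (addk m' a) (meeti (addk m' a) X') = subk p (meeti p Y) ->
  subk m' (meeti m' X') = subk m (meeti m X) ->
  addk (subk (meeti (addk m' a) X') (meeti m' X')) (subk (meeti (addk p b) Y) (meeti p Y))
    = subk (meeti (addk (addk m a) b) X) (meeti m X) ->
  subk (meeti (addk m' a) X') (meeti m' X') = subk (meeti (addk m a) X) (meeti m X) /\
  subk p (meeti p Y) = subk (addk m a) (meeti (addk m a) X).
Proof. by move=> *; split; nk_arith. Qed.

End Meets.

Section KGraph.
Variables (k : nat) (L : kgraph k).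

Lemma comp_deg_inj (f g f' g' : Mor L) : src f = rng g -> src f' = rng g' ->
  comp f g = comp f' g' -> deg f = deg f' -> f = f' /\ g = g'.
Proof.
move=> fg fg' e d.
have [mu [nu [_ U]]] := unique_fact (deg_comp fg).
have [-> ->] := U f g fg erefl erefl erefl.
have dg : deg g' = deg g.
  have := deg_comp fg'; rewrite -e (deg_comp fg) d => D; nk_arith.
by have [-> ->] := U f' g' fg' (esym e) (esym d) dg.
Qed.

Lemma segE (w al mu be : Mor L) p q :
  src al = rng mu -> src mu = rng be -> comp al (comp mu be) = w ->
  deg al = p -> deg mu = subk q p -> seg w p q = mu.
Proof.
move=> al_mu mu_be e dal dmu.
have [|al' [be' [al_mu' mu_be' e' dal' dmu']]] := epsilon_spec (inhabits w)
  (fun mu => exists al be, [/\ src al = rng mu, src mu = rng be,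
     comp al (comp mu be) = w, deg al = p & deg mu = subk q p]).
  by exists mu, al, be.
have r : src al = rng (comp mu be) by rewrite rng_comp.
have r' : src al' = rng (comp (seg w p q) be') by rewrite rng_comp.
have [_ E] := comp_deg_inj r r' (etrans e (esym e')) (etrans dal (esym dal')).
by have [] := comp_deg_inj mu_be mu_be' E (etrans dmu (esym dmu')).
Qed.

Section GraphMorphism.
Variable x : kpath L.
Hypothesis gx : is_graph_morphism x.

Lemma pmap_deg p q : lek p q -> lei q (pdeg x) -> deg (pmap x p q) = subk q p.
Proof. by move=> pq qx; case: (gx pq (lekk q) qx). Qed.

Lemma pmap_src p q : lek p q -> lei q (pdeg x) -> src (pmap x p q) = pv x q.
Proof. by move=> pq qx; case: (gx pq (lekk q) qx). Qed.

Lemma pmap_rng p q : lek p q -> lei q (pdeg x) -> rng (pmap x p q) = pv x p.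
Proof. by move=> pq qx; case: (gx pq (lekk q) qx). Qed.

Lemma pmap_comp p q t : lek p q -> lek q t -> lei t (pdeg x) ->
  comp (pmap x p q) (pmap x q t) = pmap x p t.
Proof. by move=> pq qt tx; case: (gx pq qt tx). Qed.

End GraphMorphism.

Lemma pmap_concat (u u1 u2 : Mor L) (y : kpath L) s t A U :
  is_graph_morphism y -> src u1 = rng u2 -> comp u1 u2 = u -> src u2 = pv y s ->
  deg u1 = A -> deg u = U -> lek s t -> lei t (pdeg y) ->
  pmap (concat u (shift y s)) A (addk U (subk t s)) = comp u2 (pmap y s t).
Proof.
move=> gy u12 def_u u2y <- <- st ty; rewrite /=.
have -> : addk (@zerok k) s = s by nk_arith.
have -> : addk (subk (joink (addk (deg u) (subk t s)) (deg u)) (deg u)) s = t by nk_arith.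
have u2_y : src u2 = rng (pmap y s t) by rewrite pmap_rng.
apply: (segE (al := u1) (be := idm (src (comp u2 (pmap y s t))))).
- by rewrite rng_comp.
- by rewrite rng_idm.
- by rewrite comp_idr compA // def_u.
- by [].
- have du := congr1 deg def_u; rewrite deg_comp // in du.
  rewrite deg_comp // pmap_deg //; nk_arith.
Qed.

Lemma concat_ML_MP (l : Mor L) (y : kpath L) p q :
  is_graph_morphism y -> lek p q -> lei p (pdeg y) -> src l = pv y p ->
  meeti (@zerok k) (pdeg (concat l (shift y p))) = @zerok k /\
  pmap (concat l (shift y p)) (@zerok k)
       (meeti (subk (addk (deg l) q) p) (pdeg (concat l (shift y p))))
    = comp l (pmap y p (meeti q (pdeg y))).
Proof.
move=> gy pq py ly; split; first by nk_arith.
have -> : meeti (subk (addk (deg l) q) p) (pdeg (concat l (shift y p)))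
          = addk (deg l) (subk (meeti q (pdeg y)) p) by nk_arith.
by apply: pmap_concat (deg_idm _) erefl _ (lei_meeti _ _); rewrite ?src_idm ?comp_idl //; nk_arith.
Qed.

Lemma concat_MP_MP (x y : kpath L) m n p q :
  is_graph_morphism x -> is_graph_morphism y -> lek m n -> lek p q -> equivV x n y p ->
  let z := concat (pmap x (@zerok k) (meeti n (pdeg x))) (shift y (meeti p (pdeg y))) in
  meeti m (pdeg z) = meeti m (pdeg x) /\
  pmap z (meeti m (pdeg z)) (meeti (subk (addk n q) p) (pdeg z))
    = comp (pmap x (meeti m (pdeg x)) (meeti n (pdeg x)))
           (pmap y (meeti p (pdeg y)) (meeti q (pdeg y))).
Proof.
move=> gx gy mn pq [xy overshoot] z.
have mnx := lek_meeti (pdeg x) mn.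
have m0 : lek (@zerok k) (meeti m (pdeg x)) by nk_arith.
have du : deg (pmap x (@zerok k) (meeti n (pdeg x))) = meeti n (pdeg x).
  rewrite pmap_deg ?lei_meeti //; nk_arith.
have zm : meeti m (pdeg z) = meeti m (pdeg x) by nk_arith.
have -> : meeti (subk (addk n q) p) (pdeg z)
          = addk (meeti n (pdeg x)) (subk (meeti q (pdeg y)) (meeti p (pdeg y))) by nk_arith.
split=> //; rewrite zm.
apply: pmap_concat gy _ (pmap_comp gx m0 mnx (lei_meeti _ _)) _ _ du _ (lei_meeti _ _).
- by rewrite pmap_src ?pmap_rng ?(lei_trans mnx) ?lei_meeti.
- by rewrite pmap_src ?lei_meeti.
- rewrite pmap_deg ?(lei_trans mnx) ?lei_meeti //; nk_arith.
- exact: lek_meeti.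
Qed.

Definition factorization (f : Mbar L) a b (g h : Mbar L) : Prop :=
  [/\ mbar_valid g /\ mbar_valid h, composable g h, mbar_eq (compbar g h) f,
      dbar g = a & dbar h = b].

Definition unique_factorization (f : Mbar L) a b : Prop :=
  exists g h, factorization f a b g h /\
    forall g' h', factorization f a b g' h' -> mbar_eq g' g /\ mbar_eq h' h.

Lemma unique_factorization_ML (l : Mor L) a b :
  deg l = addk a b -> unique_factorization (ML l) a b.
Proof.
move=> D; have [mu [nu [[munu e dmu dnu] U]]] := unique_fact D.
exists (ML mu), (ML nu); split; first by split.
move=> [l'|x' m' n'] [l''|y p q] [] //= _ c e' d1 d2.
exact: U.
Qed.

Lemma factorization_vertex (x : kpath L) m n a b :
  is_boundary_path x -> lek m n -> ~~ lei n (pdeg x) -> subk n m = addk a b ->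
  lei (addk m a) (pdeg x) ->
  factorization (MP x m n) a b (ML (pmap x m (addk m a))) (MP x (addk m a) n).
Proof.
move=> bx mn nx D max; have gx := bx.1.
have mma : lek m (addk m a) by nk_arith.
have man : lek (addk m a) n by nk_arith.
have manx : lek (addk m a) (meeti n (pdeg x)) by nk_arith.
have lx : src (pmap x m (addk m a)) = pv x (addk m a) by exact: pmap_src.
have du : deg (pmap x m (addk m a)) = a by rewrite pmap_deg //; nk_arith.
have [z0 ez] := concat_ML_MP gx man max lx.
split=> //; rewrite /composable /= ?max //.
- rewrite /equivP z0 ez (meeti_id (lei_trans mma max)) pmap_comp ?lei_meeti //.
  by split=> //; rewrite ?du; nk_arith.
- nk_arith.
Qed.

Lemma factorization_boundary (x : kpath L) m n a b :
  is_boundary_path x -> lek m n -> ~~ lei n (pdeg x) -> subk n m = addk a b ->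
  ~~ lei (addk m a) (pdeg x) ->
  factorization (MP x m n) a b (MP x m (addk m a)) (MP x (addk m a) n).
Proof.
move=> bx mn nx D nmax; have gx := bx.1.
have mma : lek m (addk m a) by nk_arith.
have man : lek (addk m a) n by nk_arith.
have [zm ez] := concat_MP_MP (m := m) (q := n) gx gx mma man (conj erefl erefl).
split=> //; rewrite /composable /= ?(negbTE nmax) //.
- by rewrite /equivP ez zm pmap_comp ?lei_meeti ?lek_meeti //; split=> //; nk_arith.
- nk_arith.
- nk_arith.
Qed.

Definition head_factor (x : kpath L) m a : Mbar L :=
  if lei (addk m a) (pdeg x) then ML (pmap x m (addk m a)) else MP x m (addk m a).

Lemma compbar_ML_MP_eq (x y : kpath L) (l : Mor L) m n a b p q :
  is_graph_morphism x -> is_graph_morphism y -> lek m n -> subk n m = addk a b ->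
  lek p q -> lei p (pdeg y) -> src l = pv y p -> deg l = a -> subk q p = b ->
  mbar_eq (compbar (ML l) (MP y p q)) (MP x m n) ->
  [/\ lei (addk m a) (pdeg x), l = pmap x m (addk m a)
    & mbar_eq (MP y p q) (MP x (addk m a) n)].
Proof.
move=> gx gy mn D pq py ly dl db [E1 E2 _].
have [z0 ez] := concat_ML_MP gy pq py ly.
rewrite z0 ez in E1; rewrite z0 in E2.
have mx : lei m (pdeg x) by nk_arith.
rewrite (meeti_id mx) in E1.
have pQ : lek p (meeti q (pdeg y)) by rewrite -{1}(meeti_id py) lek_meeti.
have mN : lek m (meeti n (pdeg x)) by rewrite -{1}(meeti_id mx) lek_meeti.
have lQ : src l = rng (pmap y p (meeti q (pdeg y))) by rewrite pmap_rng ?lei_meeti.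
have deq := congr1 deg E1.
rewrite deg_comp // !pmap_deg ?lei_meeti // dl in deq.
have maN : lek (addk m a) (meeti n (pdeg x)) by nk_arith.
have max : lei (addk m a) (pdeg x) := lei_trans maN (lei_meeti _ _).
have mma : lek m (addk m a) by nk_arith.
rewrite -(pmap_comp gx mma maN (lei_meeti _ _)) in E1.
have [||el ey] := comp_deg_inj lQ _ E1.
- by rewrite pmap_src ?pmap_rng ?lei_meeti.
- by rewrite dl pmap_deg //; nk_arith.
split=> //; rewrite /= /equivP (meeti_id py) (meeti_id max); split=> //; nk_arith.
Qed.

Lemma compbar_MP_MP_eq (x x' y : kpath L) m n a b m' n' p q :
  is_graph_morphism x -> is_graph_morphism x' -> is_graph_morphism y ->
  lek m n -> subk n m = addk a b -> lek m' n' -> ~~ lei n' (pdeg x') -> lek p q ->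
  subk n' m' = a -> subk q p = b -> equivV x' n' y p ->
  mbar_eq (compbar (MP x' m' n') (MP y p q)) (MP x m n) ->
  [/\ ~~ lei (addk m a) (pdeg x), mbar_eq (MP x' m' n') (MP x m (addk m a))
    & mbar_eq (MP y p q) (MP x (addk m a) n)].
Proof.
move=> gx gx' gy mn D mn' nx' pq da db [xy overshoot] [E1 E2 _].
have [zm ez] := concat_MP_MP (m := m') (q := q) gx' gy mn' pq (conj xy overshoot).
rewrite ez in E1; rewrite zm in E2.
have xyQ : src (pmap x' (meeti m' (pdeg x')) (meeti n' (pdeg x')))
           = rng (pmap y (meeti p (pdeg y)) (meeti q (pdeg y))).
  by rewrite pmap_src ?pmap_rng ?lei_meeti ?lek_meeti.
have def_n' : n' = addk m' a by nk_arith.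
have def_q : q = addk p b by nk_arith.
have def_n : n = addk (addk m a) b by nk_arith.
subst n' q n.
have deq := congr1 deg E1.
rewrite deg_comp // !pmap_deg ?lei_meeti ?lek_meeti // in deq.
have [eA eS] := overshoot_split overshoot E2 deq.
have nmax : ~~ lei (addk m a) (pdeg x) by rewrite leiE -eS -overshoot -leiE.
rewrite -(pmap_comp gx (lek_meeti _ (lek_addr m a)) (lek_meeti _ (lek_addr _ b))
  (lei_meeti _ _)) in E1.
have [||ex' ey] := comp_deg_inj xyQ _ E1.
- by rewrite pmap_src ?pmap_rng ?lei_meeti ?lek_meeti ?lek_addr.
- by rewrite !pmap_deg ?lei_meeti ?lek_meeti ?lek_addr.
by split=> //=; rewrite /equivP !addKk.
Qed.

Lemma unique_factorization_MP (x : kpath L) m n a b :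
  inP x m n -> subk n m = addk a b -> unique_factorization (MP x m n) a b.
Proof.
move=> [bx [mn nx]] D; have gx := bx.1.
exists (head_factor x m a), (MP x (addk m a) n); split.
  rewrite /head_factor; case: ifP => [max | /negbT nmax].
  - exact: factorization_vertex.
  - exact: factorization_boundary.
move=> [l|x' m' n'] [l'|y p q] [] //=.
- move=> [_ [[gy _] [pq _]]]; rewrite /composable /=; case: ifP => py //= ly e da db.
  have [max -> ey] := compbar_ML_MP_eq gx gy mn D pq py ly da db e.
  by rewrite /head_factor max.
- move=> [[[gx' _] [mn' nx']] [[gy _] [pq _]]].
  rewrite /composable /=; case: ifP => py //= xy e da db.
  have [nmax ex' ey] := compbar_MP_MP_eq gx gx' gy mn D mn' nx' pq da db xy e.
  by rewrite /head_factor (negbTE nmax).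
Qed.

End KGraph.

Theorem lemma3p23 (k : nat) (L : kgraph k) (f : Mbar L) (a b : Nk k) :
  mbar_valid f -> dbar f = addk a b ->
  exists g h : Mbar L,
    [/\ mbar_valid g /\ mbar_valid h, composable g h, mbar_eq (compbar g h) f,
        dbar g = a & dbar h = b] /\
    forall g' h' : Mbar L,
      mbar_valid g' -> mbar_valid h' -> composable g' h' ->
      mbar_eq (compbar g' h') f -> dbar g' = a -> dbar h' = b ->
      mbar_eq g' g /\ mbar_eq h' h.
Proof.
move=> vf D.
have [g [h [fgh U]]] : unique_factorization f a b.
  case: f vf D => [l|x m n] /= vf D.
  - exact: unique_factorization_ML.
  - exact: unique_factorization_MP.
exists g, h; split=> // g' h' vg vh c e dg dh.
exact: U.
Qed.
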